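(* Let $M$ be an abelian group. If $M$ is an elementary abelian $2$-group (i.e. $x^2=1$ for all $x\in M$), then $(L_M,* )$ is an elementary abelian $2$-group. If $M$ is not an elementary abelian $2$-group, then $(L_M,* )$ is a nonassociative and noncommutative right Bol loop.
   Context: Let $M$ be an abelian group (written multiplicatively) and $K=\{1,a,b,c\}$ the Klein four-group. Set $L_M=K\times M$ with the operation $(A,x)*(B,y)=(AB,xy)$ if $B=1$, and $(A,x)*(B,y)=(AB,x^{-1}y)$ if $B\neq 1$. A right Bol loop is a loop satisfying $x((yz)y)=((xy)z)y$. *)

(* The abelian group M (written multiplicatively in the paper)
   is modelled as a zmodType: xy := x + y, x^{-1} := -x, 1 := 0. *)
From HB Require Import structures.
From mathcomp Require Import all_boot all_order all_algebra.
Set Implicit Arguments. Unset Strict Implicit. Unset Printing Implicit Defensive.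
Import GRing.Theory.
Local Open Scope ring_scope.

Inductive klein := k1 | ka | kb | kc.

Definition kmul (A B : klein) : klein :=
  match A, B with
  | k1, X | X, k1 => X
  | ka, ka | kb, kb | kc, kc => k1
  | ka, kb | kb, ka => kc
  | ka, kc | kc, ka => kb
  | kb, kc | kc, kb => ka
  end.

Definition LM (M : zmodType) : Type := (klein * M)%type.

Definition Lop (M : zmodType) (p q : LM M) : LM M :=
  let: (A, x) := p in
  let: (B, y) := q in
  match B with
  | k1 => (kmul A B, x + y)
  | _ => (kmul A B, - x + y)
  end.

(* (T, op) is an elementary abelian 2-group: an associative, commutative
   magma with identity e in which every element squares to e (hence a group). *)
Definition elementary_abelian_2group (T : Type) (op : T -> T -> T) : Prop :=
  exists e : T,
    (forall x, op e x = x /\ op x e = x) /\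
    (forall x y z, op x (op y z) = op (op x y) z) /\
    (forall x y, op x y = op y x) /\
    (forall x, op x x = e).

Definition is_loop (T : Type) (op : T -> T -> T) : Prop :=
  (exists e : T, forall x, op e x = x /\ op x e = x) /\
  (forall a b : T, exists! x, op a x = b) /\
  (forall a b : T, exists! y, op y a = b).

Definition right_bol_loop (T : Type) (op : T -> T -> T) : Prop :=
  is_loop op /\
  forall x y z, op x (op (op y z) y) = op (op (op x y) z) y.

Definition nonassociative (T : Type) (op : T -> T -> T) : Prop :=
  exists x y z, op x (op y z) <> op (op x y) z.

Definition noncommutative (T : Type) (op : T -> T -> T) : Prop :=
  exists x y, op x y <> op y x.

(* Write [flip B x] for x if B = 1 and -x otherwise, so that
   (A,x) * (B,y) = (AB, flip B x + y).  The maps [flip B] form an action of K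
   on M by commuting involutions.  If M has exponent 2 this action is trivial
   and L_M is the direct product K x M.  In general the Bol identity holds
   because both sides equal (XZ, flip Z x + flip Y (flip Z y) + flip Y z + y),
   while an element m with -m <> m witnesses nonassociativity and
   noncommutativity through (1,m), (a,0), (b,0). *)
From mathcomp Require Import all_boot all_order all_algebra.
From Stdlib Require Import Classical_Pred_Type.
Import GRing.Theory.
Local Open Scope ring_scope.

Lemma kmul1k A : kmul k1 A = A. Proof. by case: A. Qed.
Lemma kmulk1 A : kmul A k1 = A. Proof. by case: A. Qed.
Lemma kmulkk A : kmul A A = k1. Proof. by case: A. Qed.
Lemma kmulC A B : kmul A B = kmul B A. Proof. by case: A; case: B. Qed.
Lemma kmulA A B C : kmul A (kmul B C) = kmul (kmul A B) C.
Proof. by case: A; case: B; case: C. Qed.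

Lemma kmulK A B : kmul A (kmul A B) = B.
Proof. by rewrite kmulA kmulkk kmul1k. Qed.

Lemma kmulKr A B : kmul (kmul B A) A = B.
Proof. by rewrite -kmulA kmulkk kmulk1. Qed.

Lemma kmul_conj Y Z : kmul (kmul Y Z) Y = Z.
Proof. by rewrite kmulC kmulK. Qed.

Section Flip.
Variable M : zmodType.
Implicit Types (x y : M) (A B Y Z : klein).

Definition flip B x : M := if B is k1 then x else - x.

Lemma Lop_flip A x B y : Lop (A, x) (B, y) = (kmul A B, flip B x + y).
Proof. by case: B. Qed.

Lemma flip0 B : flip B 0 = 0.
Proof. by case: B; rewrite //= oppr0. Qed.

Lemma flipD B x y : flip B (x + y) = flip B x + flip B y.
Proof. by case: B => //=; rewrite opprD. Qed.

Lemma flipK B x : flip B (flip B x) = x.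
Proof. by case: B; rewrite //= opprK. Qed.

Lemma flipC Y Z x : flip Y (flip Z x) = flip Z (flip Y x).
Proof. by case: Y; case: Z. Qed.

Lemma oppr_eq_self x : - x = x <-> x + x = 0.
Proof.
split=> [E | /eqP]; first by rewrite -{1}E addNr.
by rewrite addr_eq0 => /eqP.
Qed.

Lemma flip_exponent2 : (forall x, x + x = 0) -> forall B x, flip B x = x.
Proof. by move=> M2 [] x //=; apply/oppr_eq_self. Qed.

Lemma Lop_elementary_abelian_2group :
  (forall x, x + x = 0) -> elementary_abelian_2group (@Lop M).
Proof.
move=> M2; have flipE := flip_exponent2 M2.
exists (k1, 0); split; [|split; [|split]].
- by move=> [A x]; rewrite !Lop_flip !flipE add0r addr0 kmul1k kmulk1.
- by move=> [A x] [B y] [C z]; rewrite !Lop_flip !flipE addrA kmulA.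
- by move=> [A x] [B y]; rewrite !Lop_flip !flipE addrC kmulC.
- by move=> [A x]; rewrite Lop_flip flipE M2 kmulkk.
Qed.

Lemma Lop_loop : is_loop (@Lop M).
Proof.
split; [|split].
- by exists (k1, 0) => [[A x]]; rewrite !Lop_flip flip0 add0r addr0 kmul1k kmulk1.
- move=> [A u] [B w]; exists (kmul A B, w - flip (kmul A B) u); split.
    by rewrite Lop_flip kmulK addrC subrK.
  move=> [X v]; rewrite Lop_flip => -[<- <-].
  by rewrite kmulK [_ + v]addrC addrK.
- move=> [A u] [B w]; exists (kmul B A, flip A (w - u)); split.
    by rewrite Lop_flip kmulKr flipK subrK.
  move=> [Y v]; rewrite Lop_flip => -[<- <-].
  by rewrite kmulKr addrK flipK.
Qed.

Lemma Lop_right_bol (p q r : LM M) :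
  Lop p (Lop (Lop q r) q) = Lop (Lop (Lop p q) r) q.
Proof.
case: p q r => [X x] [Y y] [Z z].
rewrite !Lop_flip !flipD kmul_conj -(kmulA X Y Z) -kmulA kmul_conj.
by rewrite (flipC Y Z (flip Y x)) flipK !addrA.
Qed.

Section NonExponent2.
Variables (m : M) (m2 : m + m <> 0).

Lemma opp_neq_self : - m <> m.
Proof. by move/oppr_eq_self. Qed.

Lemma Lop_nonassociative : nonassociative (@Lop M).
Proof.
exists (k1, m), (ka, 0), (kb, 0); rewrite !Lop_flip /= oppr0 !addr0 opprK => -[].
exact: opp_neq_self.
Qed.

Lemma Lop_noncommutative : noncommutative (@Lop M).
Proof.
exists (k1, m), (ka, 0); rewrite !Lop_flip /= addr0 add0r => -[].
exact: opp_neq_self.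
Qed.

End NonExponent2.
End Flip.

Theorem proposition3p3 (M : zmodType) :
  ((forall x : M, x + x = 0) -> elementary_abelian_2group (@Lop M)) /\
  (~ (forall x : M, x + x = 0) ->
     nonassociative (@Lop M) /\ noncommutative (@Lop M) /\ right_bol_loop (@Lop M)).
Proof.
split; first exact: Lop_elementary_abelian_2group.
move=> /not_all_ex_not [m m2].
split; first exact: Lop_nonassociative m2.
split; first exact: Lop_noncommutative m2.
split; [exact: Lop_loop | exact: Lop_right_bol].
Qed.
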